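(* Let $\xi>0$, $\tau>0$, $A_n:=\xi\tau^n n!$ for $n\ge1$, and $R_\ell>0$ for $\ell\ge1$. Define $\Gamma^{[\ell]}_n$ and $\mathbb{B}^{[\ell]}_{n,\lambda}$ recursively by $\Gamma^{[1]}_n:=A_n$ ($n\ge1$); $\Gamma^{[\ell]}_n:=\sum_{\lambda=1}^nA_\lambda R_{\ell-1}^\lambda\mathbb{B}^{[\ell-1]}_{n,\lambda}$ ($\ell\ge2$, $n\ge1$); $\mathbb{B}^{[\ell]}_{n,1}:=\Gamma^{[\ell]}_n$ ($n\ge1$); $\mathbb{B}^{[\ell]}_{n,\lambda}:=\sum_{i=\lambda-1}^{n-1}\binom{n-1}{i}\Gamma^{[\ell]}_{n-i}\mathbb{B}^{[\ell]}_{i,\lambda-1}$ ($\ell\ge1$, $n\ge\lambda\ge2$). Let $P_0:=1$ and $P_k:=\prod_{t=1}^k(\xi\tau R_t)$ for $k\ge1$. Then $$\Gamma^{[\ell]}_n=\mathbb{B}^{[\ell]}_{n,1}=P_{\ell-1}\Big(\sum_{k=0}^{\ell-1}P_k\Big)^{n-1}\xi\,\tau^n\,n!\quad\text{for }\ell\ge1,\ n\ge1,$$ $$\mathbb{B}^{[\ell]}_{n,\lambda}=P_{\ell-1}^\lambda\Big(\sum_{k=0}^{\ell-1}P_k\Big)^{n-\lambda}\xi^\lambda\,\tau^n\,\frac{n!}{\lambda!}\binom{n-1}{\lambda-1}\quad\text{for }\ell\ge1,\ n\ge\lambda\ge1.$$ *)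

From mathcomp Require Import all_boot all_order all_algebra.
Set Implicit Arguments. Unset Strict Implicit. Unset Printing Implicit Defensive.
Import Order.TTheory GRing.Theory Num.Theory.
Local Open Scope ring_scope.

Section Defs.
Variables (R : realFieldType) (xi tau : R) (Rs : nat -> R).

Definition Aseq (n : nat) : R := xi * tau ^+ n * (n`!)%:R.

(* Given Gamma^[l] as a function G, Bof G lam n = B^[l]_{n,lam}
   (lam >= 1; value at lam = 0 is an unused junk value 0). *)
Fixpoint Bof (G : nat -> R) (lam : nat) (n : nat) : R :=
  match lam with
  | 0 => 0
  | S k => if k is 0 then G n
           else \sum_(k <= i < n) ('C(n.-1, i))%:R * G (n - i)%N * Bof G k i
  end.

(* Gam l n = Gamma^[l]_n for l >= 1 (Gam 0 is an unused junk value 0). *)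
Fixpoint Gam (l : nat) : nat -> R :=
  match l with
  | 0 => fun _ => 0
  | S m => if m is 0 then Aseq
           else fun n => \sum_(1 <= lam < n.+1)
                   Aseq lam * Rs m ^+ lam * Bof (Gam m) lam n
  end.

Definition Pk (k : nat) : R := \prod_(1 <= t < k.+1) (xi * tau * Rs t).

End Defs.

(* If [Γ_n = c a^(n-1) ξ τ^n n!], induction on [λ] shows that
   [λ! B_(n,λ) = c^λ a^(n-λ) ξ^λ τ^n n! C(n-1, λ-1)]: in the convolution
   defining [B_(n,λ+1)] the factorials collapse to [(n-1)! (n-i)], and
   [Σ_i (n-i) C(i-1, λ-1) = C(n, λ+1)] is an iterated hockey-stick identity.
   Substituting into the recursion for [Γ^[l+1]], the [λ!] cancels against
   [A_λ] and the sum over [λ] becomes the binomial expansion of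
   [(a + c ξ τ R_l)^(n-1)], where [c = P_(l-1)] and [a = Σ_(k<l) P_k]; since
   [c ξ τ R_l = P_l], this is again of the same form with [c = P_l] and
   [a = Σ_(k<=l) P_k]. *)
From mathcomp Require Import all_boot all_order all_algebra.
From mathcomp Require Import zify ring.
Set Implicit Arguments.
Unset Strict Implicit.
Unset Printing Implicit Defensive.
Import Order.TTheory GRing.Theory Num.Theory.

Lemma sum_bin_pred k n : \sum_(k.+1 <= i < n.+1) 'C(i.-1, k) = 'C(n, k.+1).
Proof.
elim: n => [|n IHn]; first by rewrite big_geq // bin0n.
have [le_kn | lt_nk] := leqP k n; last by rewrite big_geq ?bin_small //; lia.
by rewrite big_nat_recr /= ?IHn ?binS //; lia.
Qed.

Lemma sum_subn_mul_bin_pred k n :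
  \sum_(k.+1 <= i < n) (n - i) * 'C(i.-1, k) = 'C(n, k.+2).
Proof.
elim: n => [|n IHn]; first by rewrite big_geq // bin0n.
have [lt_kn | le_nk] := ltnP k n; last by rewrite big_geq ?bin_small //; lia.
case: n IHn lt_kn => [|n] IHn lt_kn //.
rewrite big_nat_recr /=; last by lia.
under eq_big_nat => i /andP[_ lt_in].
  rewrite (_ : n.+2 - i = (n.+1 - i) + 1)%N; last by lia.
  rewrite mulnDl mul1n.
over.
by rewrite big_split /= IHn sum_bin_pred subSnn mul1n -addnA -!binS.
Qed.

Lemma bin_pred_mul_fact n i :
  (i < n)%N -> 'C(n.-1, i) * (n - i)`! * i`! = (n.-1)`! * (n - i).
Proof.
move=> lt_in; rewrite (_ : n - i = (n.-1 - i).+1)%N; last by lia.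
by rewrite factS -(@bin_fact n.-1 i); [ring | lia].
Qed.

Lemma fact_pred_mul_bin n k :
  (0 < n)%N -> k.+2 * ((n.-1)`! * 'C(n, k.+2)) = n`! * 'C(n.-1, k.+1).
Proof.
by case: n => // n _; rewrite mulnCA -mul_bin_diag factS /=; ring.
Qed.

Local Open Scope ring_scope.

Section ConvolutionPowers.
Variables (R : realFieldType) (xi tau c a : R) (G : nat -> R).
Hypothesis G_closed :
  forall n, (0 < n)%N -> G n = c * a ^+ n.-1 * xi * tau ^+ n * n`!%:R.

Lemma Bof_term_closed k n i : (k < i < n)%N ->
  'C(n.-1, i)%:R * G (n - i) *
    (c ^+ k.+1 * a ^+ (i - k.+1) * xi ^+ k.+1 * tau ^+ i * i`!%:R * 'C(i.-1, k)%:R)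
  = c ^+ k.+2 * a ^+ (n - k.+2) * xi ^+ k.+2 * tau ^+ n
    * ((n.-1)`! * (n - i) * 'C(i.-1, k))%:R.
Proof.
move=> /andP[lt_ki lt_in]; rewrite G_closed; last by lia.
rewrite -(bin_pred_mul_fact lt_in).
have -> : a ^+ (n - k.+2) = a ^+ (n - i).-1 * a ^+ (i - k.+1).
  by rewrite -exprD; congr (_ ^+ _); lia.
have -> : tau ^+ n = tau ^+ (n - i) * tau ^+ i.
  by rewrite -exprD; congr (_ ^+ _); lia.
rewrite !natrM !exprS; ring.
Qed.

Lemma Bof_closed k n : (k < n)%N ->
  Bof G k.+1 n * (k.+1)`!%:R =
    c ^+ k.+1 * a ^+ (n - k.+1) * xi ^+ k.+1 * tau ^+ n * n`!%:R * 'C(n.-1, k)%:R.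
Proof.
elim: k n => [|k IHk] n lt_kn.
  by rewrite /= G_closed // bin0 subn1 !expr1 mulr1.
rewrite /= factS natrM (mulrC k.+2%:R) mulrA big_distrl /=.
under eq_big_nat => i /andP[le_ki lt_in].
  rewrite -mulrA IHk // Bof_term_closed; last by lia.
over.
rewrite -big_distrr /= -natr_sum.
under eq_bigr do rewrite -mulnA.
rewrite -big_distrr /= sum_subn_mul_bin_pred -mulrA -natrM mulnC.
by rewrite fact_pred_mul_bin ?natrM ?mulrA //; lia.
Qed.

End ConvolutionPowers.

Section Layers.
Variables (R : realFieldType) (xi tau : R) (Rs : nat -> R).

Local Notation P := (Pk xi tau Rs).

Lemma PkS l : P l.+1 = P l * (xi * tau * Rs l.+1).
Proof. by rewrite /Pk big_nat_recr. Qed.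

Lemma Gam_SS l n :
  Gam xi tau Rs l.+2 n =
    \sum_(1 <= lam < n.+1)
      Aseq xi tau lam * Rs l.+1 ^+ lam * Bof (Gam xi tau Rs l.+1) lam n.
Proof. by []. Qed.

Lemma Gam_closed l n : (0 < n)%N ->
  Gam xi tau Rs l.+1 n =
    P l * (\sum_(0 <= k < l.+1) P k) ^+ n.-1 * xi * tau ^+ n * n`!%:R.
Proof.
elim: l n => [|l IHl] [|m] // _.
  by rewrite /= /Pk big_geq // big_nat1 big_geq // expr1n /Aseq !mul1r.
rewrite Gam_SS big_add1 [in RHS]big_nat_recr // PkS.
set c := P l; set a := \sum_(0 <= k < l.+1) P k; set b := xi * tau * Rs l.+1.
under eq_big_nat => j /andP[_ lt_jm].
  have := Bof_closed IHl (lt_jm : (j < m.+1)%N); rewrite subSS succnK => Bof_j.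
  rewrite (_ : _ * _ = xi * tau ^+ m.+1 * (m.+1)`!%:R * (c * b)
                     * (a ^+ (m - j) * (c * b) ^+ j *+ 'C(m, j))).
    over.
  transitivity (xi * tau ^+ j.+1 * Rs l.+1 ^+ j.+1
                * (Bof (Gam xi tau Rs l.+1) j.+1 m.+1 * (j.+1)`!%:R)).
    by rewrite [Aseq _ _ _]/Aseq; ring.
  by rewrite Bof_j -[_ *+ 'C(m, j)]mulr_natr !exprMn !exprS /a /b /c; ring.
by rewrite /= -big_distrr /= big_mkord -exprDn; ring.
Qed.

End Layers.

Theorem lemma6p3 (R : realFieldType) (xi tau : R) (Rs : nat -> R) :
  0 < xi -> 0 < tau -> (forall l : nat, (1 <= l)%N -> 0 < Rs l) ->
  (forall l n : nat, (1 <= l)%N -> (1 <= n)%N ->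
     Gam xi tau Rs l n = Bof (Gam xi tau Rs l) 1 n /\
     Bof (Gam xi tau Rs l) 1 n =
       Pk xi tau Rs l.-1 * (\sum_(0 <= k < l) Pk xi tau Rs k) ^+ n.-1
         * xi * tau ^+ n * (n`!)%:R) /\
  (forall l n lam : nat, (1 <= l)%N -> (1 <= lam)%N -> (lam <= n)%N ->
     Bof (Gam xi tau Rs l) lam n =
       Pk xi tau Rs l.-1 ^+ lam * (\sum_(0 <= k < l) Pk xi tau Rs k) ^+ (n - lam)
         * xi ^+ lam * tau ^+ n * ((n`!)%:R / (lam`!)%:R)
         * ('C(n.-1, lam.-1))%:R).
Proof.
move=> _ _ _; split=> [[|l] n // _ n_gt0 | [|l] n [|k] // _ _ lt_kn].
  by split; last exact: Gam_closed.
have fact_neq0 : (k.+1)`!%:R != 0 :> R by rewrite pnatr_eq0 -lt0n fact_gt0.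
apply: (mulIf fact_neq0); rewrite (Bof_closed (@Gam_closed _ _ _ _ l)) //=.
by field.
Qed.
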